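(* Let $\mathbf L$ be an algebraic lattice with an equa-interior operator $\eta$ satisfying property (I9). If $a$, $x$ and $z_i$ ($i\in I$, $I$ an arbitrary index set) are coatoms of $\mathbf L$ with $x\wedge z_i\le a$ properly for every $i\in I$, then $\eta(x)\vee\bigwedge_{i\in I}z_i=1$.
   Context: An equa-interior operator on an algebraic lattice $\mathbf L$ is a map $\eta:L\to L$ such that for all $x,y,z\in L$: (I1) $\eta(x)\le x$; (I2) $x\ge y$ implies $\eta(x)\ge\eta(y)$; (I3) $\eta^2(x)=\eta(x)$; (I4) $\eta(1)=1$; (I5) if $\eta(x)=u$ for all $x\in X\subseteq L$ then $\eta(\bigvee X)=u$; (I6) $\eta(x)\vee(y\wedge z)=(\eta(x)\vee y)\wedge(\eta(x)\vee z)$; (I7) the image $\eta(L)$ is the complete join subsemilattice of $L$ generated by the elements of $\eta(L)$ that are compact in $\mathbf L$; (I8) there is a compact element $w\in L$ with $\eta(w)=w$ such that the interval $[w,1]$ is isomorphic to the congruence lattice of a join semilattice with $0$. Define $\tau(y)=\bigvee\{u\in L:\eta(u)=\eta(y)\}$. Property (I9): for any index set $J$ and elements $x,c,z_j$ ($j\in J$) of $L$, if $\eta(x)\le c$ and $\bigwedge_{j\in J}\tau(z_j)\le\tau(c)$, then $\eta(\eta(x)\vee\bigwedge_{j\in J}\tau(x\wedge z_j))\le c$. For coatoms, ''$x\wedge z\le a$ properly'' means $x\wedge z\le a$ while $x\not\le a$ and $z\not\le a$. *)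

From Stdlib Require Import List.
Set Implicit Arguments.
Unset Strict Implicit.

Section Lattice.
Variables (L : Type) (le : L -> L -> Prop) (sup : (L -> Prop) -> L).

Definition complete_lattice : Prop :=
  (forall x, le x x) /\
  (forall x y, le x y -> le y x -> x = y) /\
  (forall x y z, le x y -> le y z -> le x z) /\
  (forall X : L -> Prop, forall x, X x -> le x (sup X)) /\
  (forall X : L -> Prop, forall u, (forall x, X x -> le x u) -> le (sup X) u).

Definition inf (X : L -> Prop) : L := sup (fun y => forall x, X x -> le y x).
Definition join (x y : L) : L := sup (fun u => u = x \/ u = y).
Definition meet (x y : L) : L := inf (fun u => u = x \/ u = y).
Definition top : L := sup (fun _ => True).

Definition compact (c : L) : Prop :=
  forall X : L -> Prop, le c (sup X) ->
    exists l : list L, (forall y, In y l -> X y) /\ le c (sup (fun y => In y l)).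

Definition algebraic : Prop :=
  complete_lattice /\
  forall x, x = sup (fun c => compact c /\ le c x).

Definition coatom (a : L) : Prop :=
  a <> top /\ forall y, le a y -> y = a \/ y = top.

Definition properly_below (x z a : L) : Prop :=
  le (meet x z) a /\ ~ le x a /\ ~ le z a.

Definition cjs_generated (G : L -> Prop) (y : L) : Prop :=
  forall S : L -> Prop,
    (forall g, G g -> S g) ->
    (forall X : L -> Prop, (forall x, X x -> S x) -> S (sup X)) ->
    S y.

End Lattice.

Definition join_semilattice0 (S : Type) (j : S -> S -> S) (z : S) : Prop :=
  (forall a b c, j a (j b c) = j (j a b) c) /\
  (forall a b, j a b = j b a) /\
  (forall a, j a a = a) /\
  (forall a, j z a = a).

Definition congruence (S : Type) (j : S -> S -> S) (th : S -> S -> Prop) : Prop :=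
  (forall a, th a a) /\
  (forall a b, th a b -> th b a) /\
  (forall a b c, th a b -> th b c -> th a c) /\
  (forall a b c d, th a b -> th c d -> th (j a c) (j b d)).

Definition interval_iso_Con (L : Type) (le : L -> L -> Prop) (sup : (L -> Prop) -> L)
  (w : L) (S : Type) (j : S -> S -> S) : Prop :=
  exists f : L -> (S -> S -> Prop),
    (forall y, le w y -> congruence j (f y)) /\
    (forall y1 y2, le w y1 -> le w y2 ->
       (le y1 y2 <-> (forall a b, f y1 a b -> f y2 a b))) /\
    (forall th, congruence j th ->
       exists y, le w y /\ forall a b, f y a b <-> th a b).

Section Operator.
Variables (L : Type) (le : L -> L -> Prop) (sup : (L -> Prop) -> L) (eta : L -> L).

Definition equa_interior : Prop :=
  (forall x, le (eta x) x) /\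
  (forall x y, le y x -> le (eta y) (eta x)) /\
  (forall x, eta (eta x) = eta x) /\
  eta (top sup) = top sup /\
  (forall (X : L -> Prop) (u : L), (exists x, X x) ->
     (forall x, X x -> eta x = u) -> eta (sup X) = u) /\
  (forall x y z, join sup (eta x) (meet le sup y z)
     = meet le sup (join sup (eta x) y) (join sup (eta x) z)) /\
  (forall y, (exists x, y = eta x) <->
     cjs_generated sup (fun c => (exists x, c = eta x) /\ compact le sup c) y) /\
  (exists w, compact le sup w /\ eta w = w /\
     exists (S : Type) (j : S -> S -> S) (z0 : S),
       join_semilattice0 j z0 /\ interval_iso_Con le sup w j).

Definition tau (y : L) : L := sup (fun u => eta u = eta y).

Definition I9 : Prop :=
  forall (J : Type) (x c : L) (z : J -> L),
    le (eta x) c ->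
    le (inf le sup (fun t => exists k, t = tau (z k))) (tau c) ->
    le (eta (join sup (eta x)
              (inf le sup (fun t => exists k, t = tau (meet le sup x (z k))))))
       c.

End Operator.

(* Every meet [x /\ z_i] lies properly below the coatom [a]; distributivity (I6)
   then forces [eta a <= x] and [eta a <= z_i], so [eta (x /\ z_i) = eta a] and
   hence [tau (x /\ z_i) = a], coatoms being [tau]-closed.  Moreover [eta x] is
   not below [a] (coatoms are determined by their [eta]-value), so
   [eta x \/ a = 1].  Applying (I9) with [c := eta x \/ /\_i z_i], whose second
   premise holds because [tau (z_i) = z_i], gives [1 = eta (eta x \/ a) <= c]. *)
From Stdlib Require Import Classical.
Set Implicit Arguments.

Section CompleteLattice.
Variables (L : Type) (le : L -> L -> Prop) (sup : (L -> Prop) -> L).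
Hypothesis CL : complete_lattice le sup.

Lemma le_refl x : le x x. Proof. apply CL. Qed.
Lemma le_antisym x y : le x y -> le y x -> x = y. Proof. apply CL. Qed.
Lemma le_trans x y z : le x y -> le y z -> le x z. Proof. apply CL. Qed.
Lemma sup_ub (X : L -> Prop) x : X x -> le x (sup X). Proof. apply CL. Qed.
Lemma sup_lub (X : L -> Prop) u : (forall x, X x -> le x u) -> le (sup X) u.
Proof. apply CL. Qed.

Lemma inf_lb (X : L -> Prop) x : X x -> le (inf le sup X) x.
Proof. intro Xx; apply sup_lub; intros y Hy; exact (Hy x Xx). Qed.

Lemma inf_glb (X : L -> Prop) y : (forall x, X x -> le y x) -> le y (inf le sup X).
Proof. intro H; apply sup_ub; exact H. Qed.

Lemma join_ubl x y : le x (join sup x y). Proof. apply sup_ub; auto. Qed.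
Lemma join_ubr x y : le y (join sup x y). Proof. apply sup_ub; auto. Qed.
Lemma join_lub x y u : le x u -> le y u -> le (join sup x y) u.
Proof. intros; apply sup_lub; intros w [-> | ->]; auto. Qed.

Lemma meet_lbl x y : le (meet le sup x y) x. Proof. apply inf_lb; auto. Qed.
Lemma meet_lbr x y : le (meet le sup x y) y. Proof. apply inf_lb; auto. Qed.
Lemma meet_glb x y u : le u x -> le u y -> le u (meet le sup x y).
Proof. intros; apply inf_glb; intros w [-> | ->]; auto. Qed.

Lemma le_top x : le x (top sup). Proof. apply sup_ub; exact I. Qed.

Lemma top_le x : le (top sup) x -> x = top sup.
Proof. intro H; apply le_antisym; [apply le_top | exact H]. Qed.

Lemma inf_family_empty (I : Type) (z : I -> L) :
  ~ inhabited I -> inf le sup (fun t => exists i, t = z i) = top sup.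
Proof.
intro NI; apply top_le, inf_glb.
intros t [i _]; exfalso; exact (NI (inhabits i)).
Qed.

Lemma inf_family_const (I : Type) (z : I -> L) a :
  inhabited I -> (forall i, z i = a) -> inf le sup (fun t => exists i, t = z i) = a.
Proof.
intros [i0] Hz; apply le_antisym.
- apply inf_lb; exists i0; symmetry; apply Hz.
- apply inf_glb; intros t [i ->]; rewrite Hz; apply le_refl.
Qed.

Lemma coatom_le_or_join_top p y :
  coatom le sup p -> le y p \/ join sup y p = top sup.
Proof.
intros [_ Hp]; destruct (Hp _ (join_ubr y p)) as [E | E]; auto.
left; rewrite <- E; apply join_ubl.
Qed.

Section EquaInterior.
Variable eta : L -> L.
Hypothesis EI : equa_interior le sup eta.

Lemma eta_le x : le (eta x) x. Proof. exact (proj1 EI x). Qed.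
Lemma eta_mono x y : le x y -> le (eta x) (eta y). Proof. exact (proj1 (proj2 EI) y x). Qed.
Lemma eta_idem x : eta (eta x) = eta x. Proof. now destruct EI as (_ & _ & I3 & _). Qed.
Lemma eta_top : eta (top sup) = top sup. Proof. now destruct EI as (_ & _ & _ & I4 & _). Qed.

Lemma eta_join_meet_distr x y z :
  join sup (eta x) (meet le sup y z)
  = meet le sup (join sup (eta x) y) (join sup (eta x) z).
Proof. now destruct EI as (_ & _ & _ & _ & _ & I6 & _). Qed.

Lemma eta_le_eta x y : le (eta x) y -> le (eta x) (eta y).
Proof. intro H; rewrite <- eta_idem; apply eta_mono, H. Qed.

Lemma le_tau y : le y (tau sup eta y).
Proof. apply sup_ub; reflexivity. Qed.

Lemma eta_tau y : eta (tau sup eta y) = eta y.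
Proof.
destruct EI as (_ & _ & _ & _ & I5 & _).
apply I5; [exists y; reflexivity | auto].
Qed.

Lemma tau_coatom y : coatom le sup y -> tau sup eta y = y.
Proof.
intros [Ny Hy]; destruct (Hy _ (le_tau y)) as [E | E]; auto.
exfalso; apply Ny, top_le.
rewrite <- eta_top, <- E, eta_tau; apply eta_le.
Qed.

Lemma coatom_eta_inj x a :
  coatom le sup x -> coatom le sup a -> eta x = eta a -> x = a.
Proof.
intros Cx Ca E.
rewrite <- (tau_coatom Cx), <- (tau_coatom Ca); unfold tau; rewrite E; reflexivity.
Qed.

(* (I6) at [eta a]: if [eta a \/ p = 1] then [eta a \/ q = eta a \/ (p /\ q) <= a]. *)
Lemma eta_le_coatom_of_meet_le p q a :
  coatom le sup p -> le (meet le sup p q) a -> ~ le q a -> le (eta a) p.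
Proof.
intros Cp Hpq Nq; destruct (coatom_le_or_join_top (eta a) Cp) as [H | E]; auto.
exfalso; apply Nq.
assert (Hl : le (join sup (eta a) (meet le sup p q)) a)
  by (apply join_lub; [apply eta_le | exact Hpq]).
rewrite eta_join_meet_distr, E in Hl.
apply (le_trans (join_ubr (eta a) q)), (le_trans (meet_glb (le_top _) (le_refl _))), Hl.
Qed.

Section ProperlyBelow.
Variables (a x : L) (I : Type) (z : I -> L).
Hypotheses (Ca : coatom le sup a) (Cx : coatom le sup x)
  (Cz : forall i, coatom le sup (z i))
  (Hxz : forall i, properly_below le sup x (z i) a).

Lemma eta_meet_properly_below i : eta (meet le sup x (z i)) = eta a.
Proof.
destruct (Hxz i) as (Hle & Nx & Nz); apply le_antisym.
- apply eta_mono, Hle.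
- apply eta_le_eta, meet_glb.
  + exact (eta_le_coatom_of_meet_le Cx Hle Nz).
  + apply (eta_le_coatom_of_meet_le (Cz i) (q := x)); auto.
    apply (le_trans (meet_glb (meet_lbr _ _) (meet_lbl _ _))), Hle.
Qed.

Lemma tau_meet_properly_below i : tau sup eta (meet le sup x (z i)) = a.
Proof. unfold tau at 1; rewrite eta_meet_properly_below; exact (tau_coatom Ca). Qed.

Lemma eta_not_le_properly_below : inhabited I -> ~ le (eta x) a.
Proof.
intros [i] Hxa; destruct (Hxz i) as (_ & Nx & _); apply Nx.
enough (E : x = a) by (rewrite E; apply le_refl).
apply coatom_eta_inj; auto; apply le_antisym.
- apply eta_le_eta, Hxa.
- rewrite <- (eta_meet_properly_below i); apply eta_mono, meet_lbl.
Qed.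

End ProperlyBelow.
End EquaInterior.
End CompleteLattice.

Theorem theorem7p5 (L : Type) (le : L -> L -> Prop) (sup : (L -> Prop) -> L)
  (eta : L -> L) :
  algebraic le sup ->
  equa_interior le sup eta ->
  I9 le sup eta ->
  forall (a x : L) (I : Type) (z : I -> L),
    coatom le sup a -> coatom le sup x -> (forall i, coatom le sup (z i)) ->
    (forall i, properly_below le sup x (z i) a) ->
    join sup (eta x) (inf le sup (fun t => exists i, t = z i)) = top sup.
Proof.
intros [CL _] EI H9 a x I z Ca Cx Cz Hxz.
set (m := inf le sup (fun t => exists i, t = z i)).
destruct (classic (inhabited I)) as [HI | NI].
2: { apply (top_le CL); unfold m; rewrite (inf_family_empty CL z NI); apply (join_ubr CL). }
assert (Hc := H9 I x (join sup (eta x) m) z (join_ubl CL _ _)).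
rewrite (inf_family_const CL _ HI (tau_meet_properly_below CL EI z Ca Cx Cz Hxz)) in Hc.
destruct (coatom_le_or_join_top CL (eta x) Ca) as [Hxa | Jt].
- now destruct (eta_not_le_properly_below CL EI z Ca Cx Cz Hxz HI Hxa).
- rewrite Jt, (eta_top EI) in Hc; apply (top_le CL), Hc.
  apply (le_trans CL _ m).
  + apply (inf_glb CL); intros t [k ->]; apply (inf_lb CL).
    exists k; symmetry; exact (tau_coatom CL EI (Cz k)).
  + apply (le_trans CL _ _ _ (join_ubr CL (eta x) m)), (le_tau CL eta _).
Qed.
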